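(* For every $\lambda\in P^+$, $\mathrm{Stab}_{\mathcal W}(\lambda):=\{w\in\mathcal W:w(\lambda)=\lambda\}$ equals the submonoid of $\mathcal W$ generated by those $r_i$, $i\in I$, with $\alpha_i^\vee(\lambda)=0$.
   Context: $I$ countable, $A=(a_{ij})$ a Borcherds–Cartan matrix ($a_{ii}=2$ or $a_{ii}\in\mathbb Z_{\le 0}$; $a_{ij}\in\mathbb Z_{\le0}$ for $i\ne j$; $a_{ij}=0\iff a_{ji}=0$), $I^{re}=\{a_{ii}=2\}$, $I^{im}=I\setminus I^{re}$. Datum $(A,\{\alpha_i\},\{\alpha_i^\vee\},P,P^\vee)$: $P^\vee$ free $\mathbb Z$-module, $P=\mathrm{Hom}(P^\vee,\mathbb Z)$, $\mathfrak h=P^\vee\otimes\mathbb C$, $\alpha_i^\vee(\alpha_j)=a_{ij}$, $\{\alpha_i^\vee\}$ and $\{\alpha_i\}$ linearly independent; $P^+=\{\lambda\in P:\alpha_i^\vee(\lambda)\ge0\ \forall i\}$. $r_i(\mu)=\mu-\alpha_i^\vee(\mu)\alpha_i$. The monoid $\mathcal W$ is generated by $r_i$ ($i\in I$) with relations $r_i^2=1$ ($i\in I^{re}$), $(r_ir_j)^m=(r_jr_i)^m=1$ for $i\neq j\in I^{re}$ when $r_ir_j\in GL(\mathfrak h^* )$ has order $m\in\{2,3,4,6\}$, and $r_ir_j=r_jr_i$ for $i\in I^{im}$, $j\in I\setminus\{i\}$ with $a_{ij}=0$; it acts on $\mathfrak h^*$ via $r_i\mapsto r_i$. *)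

From HB Require Import structures.
From mathcomp Require Import all_boot all_order all_algebra.
From mathcomp Require Import finmap.
Set Implicit Arguments. Unset Strict Implicit. Unset Printing Implicit Defensive.
Import Order.TTheory GRing.Theory Num.Theory.
Local Open Scope ring_scope.
Local Open Scope fset_scope.

(* Conventions.
   - I : countType is the (countable) index set.
   - P^vee is the free Z-module with basis B, realised as the finitely
     supported functions B -> int (type [coweight B]).
   - P = Hom(P^vee, Z) is then identified with all functions B -> int
     (type [weight B]); the pairing <h, mu> = sum_b h(b) mu(b).
   - Elements of the monoid W are represented by words (seq I) modulo the
     monoid congruence [wequiv] generated by the defining relations; the
     word [:: i1; ...; ik] stands for r_{i1} ... r_{ik}. *)

Definition coweight (B : choiceType) := {fsfun B -> int with 0%R}.
Definition weight (B : choiceType) := B -> int.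

Definition pairing (B : choiceType) (h : coweight B) (mu : weight B) : int :=
  \sum_(b <- finsupp h) h b * mu b.

Definition BC_matrix (I : countType) (A : I -> I -> int) : Prop :=
  [/\ forall i, A i i = 2 \/ A i i <= 0,
      forall i j, i != j -> A i j <= 0
    & forall i j, A i j = 0 <-> A j i = 0].

Definition is_real (I : countType) (A : I -> I -> int) (i : I) : bool :=
  A i i == 2.

Definition realization (I : countType) (B : choiceType) (A : I -> I -> int)
    (av : I -> coweight B) (al : I -> weight B) : Prop :=
  [/\ forall i j, pairing (av i) (al j) = A i j,
      forall (s : seq I) (c : I -> int), uniq s ->
        (forall b, \sum_(i <- s) c i * av i b = 0) ->
        forall i, i \in s -> c i = 0
    &
      forall (s : seq I) (c : I -> int), uniq s ->
        (forall b, \sum_(i <- s) c i * al i b = 0) ->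
        forall i, i \in s -> c i = 0].

Definition dominant (I : countType) (B : choiceType) (av : I -> coweight B)
    (lam : weight B) : Prop :=
  forall i, 0 <= pairing (av i) lam.

Definition refl (I : countType) (B : choiceType) (av : I -> coweight B)
    (al : I -> weight B) (i : I) (mu : weight B) : weight B :=
  fun b => mu b - pairing (av i) mu * al i b.

Definition act (I : countType) (B : choiceType) (av : I -> coweight B)
    (al : I -> weight B) (w : seq I) (mu : weight B) : weight B :=
  foldr (refl av al) mu w.

Definition order_is (I : countType) (B : choiceType) (av : I -> coweight B)
    (al : I -> weight B) (i j : I) (m : nat) : Prop :=
  (0 < m)%N /\
  (forall mu, iter m (fun nu => refl av al i (refl av al j nu)) mu = mu) /\
  (forall k, (0 < k < m)%N ->
     exists mu, iter k (fun nu => refl av al i (refl av al j nu)) mu <> mu).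

Definition alt_word (I : countType) (i j : I) (m : nat) : seq I :=
  flatten (nseq m [:: i; j]).

Inductive wrel (I : countType) (B : choiceType) (A : I -> I -> int)
    (av : I -> coweight B) (al : I -> weight B) : seq I -> seq I -> Prop :=
  | wrel_sq i : is_real A i -> wrel A av al [:: i; i] [::]
  | wrel_braid_l i j m : is_real A i -> is_real A j -> i != j ->
      m \in [:: 2; 3; 4; 6]%N -> order_is av al i j m ->
      wrel A av al (alt_word i j m) [::]
  | wrel_braid_r i j m : is_real A i -> is_real A j -> i != j ->
      m \in [:: 2; 3; 4; 6]%N -> order_is av al i j m ->
      wrel A av al (alt_word j i m) [::]
  | wrel_comm i j : ~~ is_real A i -> j != i -> A i j = 0 ->
      wrel A av al [:: i; j] [:: j; i].

Inductive wequiv (I : countType) (B : choiceType) (A : I -> I -> int)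
    (av : I -> coweight B) (al : I -> weight B) : seq I -> seq I -> Prop :=
  | wequiv_rel x u v y : wrel A av al u v ->
      wequiv A av al (x ++ u ++ y) (x ++ v ++ y)
  | wequiv_refl u : wequiv A av al u u
  | wequiv_sym u v : wequiv A av al u v -> wequiv A av al v u
  | wequiv_trans u v t : wequiv A av al u v -> wequiv A av al v t ->
      wequiv A av al u t.

Definition in_stab (I : countType) (B : choiceType) (av : I -> coweight B)
    (al : I -> weight B) (lam : weight B) (w : seq I) : Prop :=
  act av al w lam = lam.

Definition in_parabolic (I : countType) (B : choiceType) (A : I -> I -> int)
    (av : I -> coweight B) (al : I -> weight B) (lam : weight B) (w : seq I)
    : Prop :=
  exists2 u : seq I, all (fun i => pairing (av i) lam == 0) u
                   & wequiv A av al w u.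

(* Call w reduced if no word equivalent to it is shorter.  If w is reduced and,
   when i is real, so is w r_i, then w(alpha_i) is a nonnegative combination of
   simple roots.  By induction on the length: let j be the last letter of w and
   write w = v x with x a word in r_i, r_j and v as short as possible; then
   v(alpha_i), v(alpha_j) are nonnegative by induction, and x(alpha_i) lies in
   N alpha_i + N alpha_j by a rank-two computation (explicit invariants, except for
   the finite dihedral types, which are checked case by case).  Hence lam - w(lam)
   is nonnegative for dominant lam and reduced w.  If moreover w = v r_i fixes lam,
   then <alpha_i^vee, lam> v(alpha_i) + (lam - v(lam)) = 0 is a sum of two
   nonnegative terms, so <alpha_i^vee, lam> = 0 (as v(alpha_i) <> 0) and v fixes
   lam; induct on v. *)

From HB Require Import structures.
From mathcomp Require Import all_boot all_order all_algebra.
From mathcomp Require Import finmap.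
From mathcomp Require Import zify ring.
From Stdlib Require Import FunctionalExtensionality Classical.
Set Implicit Arguments. Unset Strict Implicit. Unset Printing Implicit Defensive.
Import Order.TTheory GRing.Theory Num.Theory.
Local Open Scope ring_scope.

Lemma big_sub_uniq_mkcond (T : eqType) (R : nmodType) (s1 s : seq T) (f : T -> R) :
  uniq s1 -> uniq s -> {subset s1 <= s} ->
  \sum_(i <- s) (if i \in s1 then f i else 0) = \sum_(i <- s1) f i.
Proof.
move=> u1 u s1s; rewrite -big_mkcond -big_filter; apply: perm_big.
apply: uniq_perm; [exact: filter_uniq | done |].
by move=> x; rewrite mem_filter; case: (boolP (x \in s1)) => //= /s1s ->.
Qed.

Lemma ex_minimal_nat (P : nat -> Prop) n : P n ->
  exists m, P m /\ forall k, (k < m)%N -> ~ P k.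
Proof.
elim/ltn_ind: n => n IH Pn.
have [[k [lt_kn Pk]]|no_smaller] := classic (exists k, (k < n)%N /\ P k).
  exact: IH Pk.
by exists n; split => // k lt_kn Pk; apply: no_smaller; exists k.
Qed.

Lemma iter_comp_shift (T : Type) (f g : T -> T) m x :
  g (iter m (fun y => f (g y)) x) = iter m (fun y => g (f y)) (g x).
Proof. by elim: m => [//|m IH]; rewrite !iterS -IH. Qed.

Local Notation pair_word i j x := (all (fun k => (k == i) || (k == j)) x).

Fixpoint alternating (T : Type) (e f : T) (n : nat) : seq T :=
  if n is n'.+1 then alternating f e n' ++ [:: e] else [::].

Lemma alternating_add (T : Type) (e f : T) n k :
  alternating e f (n + k) =
  (if odd k then alternating f e n else alternating e f n) ++ alternating e f k.
Proof.
elim: k e f => [|k IH] e f; first by rewrite addn0 cats0.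
by rewrite addnS /= IH; case: (odd k); rewrite /= catA.
Qed.

Lemma alternating_cons (T : Type) (e f : T) k :
  alternating e f k.+1 = (if odd k then f else e) :: alternating e f k.
Proof. by rewrite -add1n alternating_add; case: (odd k). Qed.

Lemma map_alternating (T U : Type) (g : T -> U) e f n :
  map g (alternating e f n) = alternating (g e) (g f) n.
Proof. by elim: n e f => [//|n IH] e f /=; rewrite map_cat IH. Qed.

Lemma size_alternating (T : Type) (e f : T) n : size (alternating e f n) = n.
Proof. by elim: n e f => [//|n IH] e f /=; rewrite size_cat IH addn1. Qed.

Lemma alt_word_alternating (I : countType) (e f : I) m : alt_word e f m = alternating f e m.*2.
Proof.
elim: m => [//|m IH]; rewrite -[alt_word e f m.+1]/([:: e; f] ++ alt_word e f m) IH.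
by rewrite doubleS -add2n alternating_add odd_double.
Qed.

Lemma alternating_pair_word (T : eqType) (e f : T) n : pair_word e f (alternating e f n).
Proof.
apply/allP; elim: n e f => [//|n IH] e f k /=; rewrite mem_cat mem_seq1.
by case/orP => [/IH|->//]; rewrite orbC.
Qed.

Section StabilizerOfDominantWeight.
Variables (I : countType) (B : choiceType) (A : I -> I -> int)
  (av : I -> coweight B) (al : I -> weight B).
Hypothesis hA : BC_matrix A.
Hypothesis hD : realization A av al.

Local Notation r := (refl av al).
Local Notation act := (act av al).
Local Notation we := (wequiv A av al).

Lemma pairing_simple i j : pairing (av i) (al j) = A i j.
Proof. by case: hD. Qed.

Lemma cartan_diag i : is_real A i \/ (~~ is_real A i /\ A i i <= 0).
Proof.
case: (boolP (is_real A i)) => re_i; [by left | right; split => //].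
by case: hA => + _ _ => /(_ i) [Aii|//]; rewrite /is_real Aii eqxx in re_i.
Qed.

Lemma cartan_imaginary i : ~~ is_real A i -> A i i <= 0.
Proof. by move=> im_i; case: (cartan_diag i) => [re_i|[]//]; rewrite re_i in im_i. Qed.

Lemma cartan_real i : is_real A i -> A i i = 2.
Proof. exact/eqP. Qed.

Lemma cartan_offdiag i j : i != j -> A i j <= 0.
Proof. by case: hA => _ + _; apply. Qed.

Lemma cartan_sym0 i j : A i j = 0 -> A j i = 0.
Proof. by case: hA => _ _ /(_ i j) []. Qed.

Lemma pairing_lincomb (h : coweight B) (x y : int) (mu nu : weight B) :
  pairing h (fun b => x * mu b + y * nu b) = x * pairing h mu + y * pairing h nu.
Proof. by rewrite /pairing !mulr_sumr -big_split /=; apply: eq_bigr => b _; ring. Qed.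

Lemma eq_pairing (h : coweight B) (mu nu : weight B) :
  (forall b, mu b = nu b) -> pairing h mu = pairing h nu.
Proof. by move=> e; apply: eq_bigr => b _; rewrite e. Qed.

Lemma pairing_refl i j mu :
  pairing (av i) (r j mu) = pairing (av i) mu - pairing (av j) mu * A i j.
Proof.
rewrite (@eq_pairing _ _ (fun b => 1 * mu b + (- pairing (av j) mu) * al j b)).
  by rewrite pairing_lincomb pairing_simple; ring.
by move=> b; rewrite /refl; ring.
Qed.

Lemma refl_lincomb i (x y : int) (mu nu : weight B) :
  r i (fun b => x * mu b + y * nu b) = (fun b => x * r i mu b + y * r i nu b).
Proof. by apply: functional_extensionality => b; rewrite /refl pairing_lincomb; ring. Qed.

Lemma act_lincomb w (x y : int) (mu nu : weight B) :
  act w (fun b => x * mu b + y * nu b) = (fun b => x * act w mu b + y * act w nu b).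
Proof. by elim: w => [//|i w IH] /=; rewrite IH refl_lincomb. Qed.

Lemma act_scale w (c : int) mu : act w (fun b => c * mu b) = (fun b => c * act w mu b).
Proof.
have := act_lincomb w c 0 mu mu.
have -> : (fun b => c * mu b + 0 * mu b) = (fun b => c * mu b).
  by apply: functional_extensionality => b; ring.
by move=> ->; apply: functional_extensionality => b; ring.
Qed.

Lemma act_cat w1 w2 mu : act (w1 ++ w2) mu = act w1 (act w2 mu).
Proof. exact: foldr_cat. Qed.

Lemma act_rcons w i mu : act (rcons w i) mu = act w (r i mu).
Proof. by rewrite -cats1 act_cat. Qed.

Lemma refl_simple_root i : r i (al i) = (fun b => (1 - A i i) * al i b).
Proof. by apply: functional_extensionality => b; rewrite /refl pairing_simple; ring. Qed.

Lemma refl_invol i mu : is_real A i -> r i (r i mu) = mu.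
Proof.
move=> /cartan_real Aii; apply: functional_extensionality => b.
by rewrite {1}/refl pairing_refl Aii /refl; ring.
Qed.

Lemma refl_comm i j mu : A i j = 0 -> r i (r j mu) = r j (r i mu).
Proof.
move=> Aij; have Aji := cartan_sym0 Aij; apply: functional_extensionality => b.
by rewrite /refl !pairing_refl Aij Aji; ring.
Qed.

Lemma act_alt_word i j m mu :
  act (alt_word i j m) mu = iter m (fun nu => r i (r j nu)) mu.
Proof. by elim: m => [//|m IH]; rewrite /alt_word /= -/(alt_word i j m) IH. Qed.

Lemma wrel_act u v mu : wrel A av al u v -> act u mu = act v mu.
Proof.
case=> [i re_i | i j m _ _ _ _ [_ [ord _]] | i j m _ re_j _ _ [_ [ord _]] | i j _ _ Aij].
- by rewrite /= refl_invol.
- by rewrite act_alt_word ord.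
- by rewrite act_alt_word -{1}(refl_invol mu re_j) -iter_comp_shift ord refl_invol.
- exact: refl_comm.
Qed.

Lemma wequiv_act u v mu : we u v -> act u mu = act v mu.
Proof.
elim=> {u v} [x u v y uv | // | u v _ IH | u v t _ IH1 _ IH2].
- by rewrite !act_cat (wrel_act _ uv).
- by rewrite IH.
- by rewrite IH1 IH2.
Qed.

Lemma wequiv_ctx x u v y : we u v -> we (x ++ u ++ y) (x ++ v ++ y).
Proof.
elim=> {u v} [x0 u v y0 uv | u | u v _ IH | u v t _ IH1 _ IH2].
- have reassoc t : x ++ (x0 ++ t ++ y0) ++ y = (x ++ x0) ++ t ++ (y0 ++ y).
    by rewrite !catA.
  by rewrite !reassoc; exact: wequiv_rel.
- exact: wequiv_refl.
- exact: wequiv_sym.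
- exact: wequiv_trans IH1 IH2.
Qed.

Lemma wequiv_catl x u v : we u v -> we (x ++ u) (x ++ v).
Proof. by move=> uv; have := wequiv_ctx x [::] uv; rewrite !cats0. Qed.

Lemma wequiv_catr y u v : we u v -> we (u ++ y) (v ++ y).
Proof. exact: (wequiv_ctx [::] y). Qed.

Lemma wrel_wequiv u v : wrel A av al u v -> we u v.
Proof. by move=> uv; have := wequiv_rel [::] [::] uv; rewrite /= !cats0. Qed.

Lemma wequiv_sq k : is_real A k -> we [:: k; k] [::].
Proof. by move=> re_k; apply/wrel_wequiv/wrel_sq. Qed.

Lemma wequiv_rev_cat p : all (is_real A) p -> we (rev p ++ p) [::].
Proof.
elim: p => [_|k p IH /andP [re_k re_p]]; first exact: wequiv_refl.
rewrite rev_cons -cats1 -catA -[[:: k] ++ _]/([:: k; k] ++ p).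
exact: wequiv_trans (wequiv_ctx (rev p) p (wequiv_sq re_k)) (IH re_p).
Qed.

Lemma odd_size_alt_word (i j : I) m : odd (size (alt_word i j m)) = false.
Proof. by elim: m => [//|m IH]; rewrite /alt_word /= -/(alt_word i j m) IH. Qed.

Lemma wequiv_odd_size u v : we u v -> odd (size u) = odd (size v).
Proof.
elim=> {u v} // [x u v y uv | u v t _ -> //].
by rewrite !size_cat !oddD; case: uv => //= *; rewrite odd_size_alt_word.
Qed.

Definition reduced (w : seq I) := forall v, we w v -> (size w <= size v)%N.

Lemma ex_reduced w : exists u, we w u /\ reduced u.
Proof.
pose length n := exists u, we w u /\ size u = n.
have length_w : length (size w) by exists w; split => //; exact: wequiv_refl.
have [m [[u [wu <-]] min_m]] := ex_minimal_nat length_w.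
exists u; split => // v uv; rewrite leqNgt; apply/negP => lt_vu.
by apply: (min_m _ lt_vu); exists v; split => //; exact: wequiv_trans uv.
Qed.

Lemma reduced_catl x y : reduced (x ++ y) -> reduced x.
Proof. by move=> red_xy v xv; have := red_xy _ (wequiv_catr y xv); rewrite !size_cat leq_add2r. Qed.

Lemma reduced_catr x y : reduced (x ++ y) -> reduced y.
Proof. by move=> red_xy v yv; have := red_xy _ (wequiv_catl x yv); rewrite !size_cat leq_add2l. Qed.

Lemma reduced_wequiv u v : reduced u -> we u v -> (size v <= size u)%N -> reduced v.
Proof.
move=> red_u uv le_vu t vt; apply: leq_trans le_vu (red_u _ _); exact: wequiv_trans vt.
Qed.

Lemma reduced_wequiv_size u v : reduced u -> reduced v -> we u v -> size u = size v.
Proof.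
by move=> red_u red_v uv; apply/eqP; rewrite eqn_leq red_u // red_v //; exact: wequiv_sym.
Qed.

Lemma not_reduced_sq x k y : is_real A k -> ~ reduced (x ++ [:: k; k] ++ y).
Proof. by move=> re_k /(_ _ (wequiv_ctx x y (wequiv_sq re_k))); rewrite !size_cat /=; lia. Qed.

Lemma not_reduced_shorter w : ~ reduced w -> exists u, [/\ we w u, reduced u & (size u < size w)%N].
Proof.
move=> nred_w; have [v [wv lt_vw]] : exists v, we w v /\ (size v < size w)%N.
  apply: NNPP => no_v; apply: nred_w => v wv; rewrite leqNgt; apply/negP => lt_vw.
  by apply: no_v; exists v.
have [u [vu red_u]] := ex_reduced v.
exists u; split => //; first exact: wequiv_trans vu.
by apply: leq_ltn_trans lt_vw; apply: red_u; exact: wequiv_sym.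
Qed.

(** * The cone of nonnegative combinations of simple roots *)

Definition Qplus (beta : weight B) := exists (s : seq I) (c : I -> int),
  [/\ uniq s, (forall i, 0 <= c i) & beta = (fun b => \sum_(i <- s) c i * al i b)].

Lemma Qplus_simple i : Qplus (al i).
Proof.
exists [:: i], (fun _ => 1); split => //.
by apply: functional_extensionality => b; rewrite big_seq1 mul1r.
Qed.

Lemma Qplus0 : Qplus (fun _ => 0).
Proof.
exists [::], (fun _ => 0); split => //.
by apply: functional_extensionality => b; rewrite big_nil.
Qed.

Lemma lincomb_common_support (s1 s2 : seq I) (c1 c2 : I -> int) : uniq s1 -> uniq s2 ->
  let s := undup (s1 ++ s2) in
  [/\ uniq s,
      forall b, \sum_(i <- s1) c1 i * al i b =
                \sum_(i <- s) (if i \in s1 then c1 i else 0) * al i b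
    & forall b, \sum_(i <- s2) c2 i * al i b =
                \sum_(i <- s) (if i \in s2 then c2 i else 0) * al i b].
Proof.
move=> u1 u2 s; have us : uniq s := undup_uniq _.
have extend (s' : seq I) c : uniq s' -> {subset s' <= s} -> forall b,
    \sum_(i <- s') c i * al i b = \sum_(i <- s) (if i \in s' then c i else 0) * al i b.
  move=> u' sub b; rewrite -(big_sub_uniq_mkcond _ u' us sub).
  by apply: eq_bigr => i _; case: (i \in s') => //; rewrite mul0r.
by split => //; apply: extend => // x; rewrite mem_undup mem_cat => ->; rewrite ?orbT.
Qed.

Lemma Qplus_lincomb beta gamma (x y : int) : Qplus beta -> Qplus gamma -> 0 <= x -> 0 <= y ->
  Qplus (fun b => x * beta b + y * gamma b).
Proof.
move=> [s1 [c1 [u1 c1_ge0 ->]]] [s2 [c2 [u2 c2_ge0 ->]]] x_ge0 y_ge0.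
have [us e1 e2] := lincomb_common_support c1 c2 u1 u2.
exists (undup (s1 ++ s2)),
  (fun i => x * (if i \in s1 then c1 i else 0) + y * (if i \in s2 then c2 i else 0)).
split => //.
  by move=> i; apply: addr_ge0; apply: mulr_ge0 => //; case: (_ \in _).
apply: functional_extensionality => b; rewrite e1 e2 !mulr_sumr -big_split /=.
by apply: eq_bigr => i _; ring.
Qed.

Lemma Qplus_scale beta (c : int) : Qplus beta -> 0 <= c -> Qplus (fun b => c * beta b).
Proof.
move=> Qb c_ge0; have := Qplus_lincomb Qb Qb c_ge0 (lexx 0).
by have -> : (fun b => c * beta b + 0 * beta b) = (fun b => c * beta b)
  by apply: functional_extensionality => b; ring.
Qed.

Lemma Qplus_sum_eq0 beta gamma : Qplus beta -> Qplus gamma ->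
  (forall b, beta b + gamma b = 0) -> beta = (fun _ => 0).
Proof.
move=> [s1 [c1 [u1 c1_ge0 ->]]] [s2 [c2 [u2 c2_ge0 ->]]] sum0.
have [us e1 e2] := lincomb_common_support c1 c2 u1 u2.
set c1' := fun i => if i \in s1 then c1 i else 0.
set c2' := fun i => if i \in s2 then c2 i else 0.
have c1'_ge0 i : 0 <= c1' i by rewrite /c1'; case: (_ \in _).
have c2'_ge0 i : 0 <= c2' i by rewrite /c2'; case: (_ \in _).
have coef0 : forall i, i \in undup (s1 ++ s2) -> c1' i + c2' i = 0.
  case: hD => _ _; apply => // b; rewrite -[RHS](sum0 b) e1 e2 -big_split /=.
  by apply: eq_bigr => i _; rewrite mulrDl.
apply: functional_extensionality => b; rewrite e1 big1_seq // => i /andP [_ /coef0 sum_i0].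
have c1'0 : c1' i = 0 by have := c1'_ge0 i; have := c2'_ge0 i; lia.
by rewrite -/(c1' i) c1'0 mul0r.
Qed.

Lemma simple_root_neq0 i : al i <> (fun _ => 0).
Proof.
move=> al0; case: hD => _ _ /(_ [:: i] (fun _ => 1) erefl) free.
have /free /(_ i) : forall b, \sum_(k <- [:: i]) (fun _ : I => 1) k * al k b = 0.
  by move=> b; rewrite big_seq1 mul1r al0.
by rewrite mem_seq1 eqxx => /(_ isT).
Qed.

(** * Rank two *)

Definition comb2 (i j : I) (p : int * int) : weight B := fun b => p.1 * al i b + p.2 * al j b.

Definition refl_coord (i j k : I) (p : int * int) : int * int :=
  if k == i then (p.1 - (p.1 * A i i + p.2 * A i j), p.2)
  else (p.1, p.2 - (p.1 * A j i + p.2 * A j j)).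

Lemma refl_coord_l i j p : refl_coord i j i p = (p.1 - (p.1 * A i i + p.2 * A i j), p.2).
Proof. by rewrite /refl_coord eqxx. Qed.

Lemma refl_coord_r i j p : i != j ->
  refl_coord i j j p = (p.1, p.2 - (p.1 * A j i + p.2 * A j j)).
Proof. by move=> ij; rewrite /refl_coord eq_sym (negbTE ij). Qed.

Lemma pairing_comb2 k i j p : pairing (av k) (comb2 i j p) = p.1 * A k i + p.2 * A k j.
Proof. by rewrite pairing_lincomb !pairing_simple. Qed.

Lemma refl_comb2 i j k p : i != j -> (k == i) || (k == j) ->
  r k (comb2 i j p) = comb2 i j (refl_coord i j k p).
Proof.
move=> ij /orP [] /eqP ->; apply: functional_extensionality => b;
  rewrite /refl pairing_comb2 ?refl_coord_l ?refl_coord_r // /comb2 /=; ring.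
Qed.

Lemma act_comb2 i j x p : i != j -> pair_word i j x ->
  act x (comb2 i j p) = comb2 i j (foldr (refl_coord i j) p x).
Proof. by move=> ij; elim: x => [//|k x IH] /= /andP [k_ij /IH ->]; rewrite refl_comb2. Qed.

Lemma simple_root_comb2 i j : al i = comb2 i j (1, 0).
Proof. by apply: functional_extensionality => b; rewrite /comb2 /=; ring. Qed.

Lemma comb2_eq0 i j p : i != j -> comb2 i j p = (fun _ => 0) -> p = (0, 0).
Proof.
move=> ij p0; case: hD => _ _ /(_ [:: i; j] (fun k => if k == i then p.1 else p.2)).
rewrite /= inE ij => /(_ isT) free.
have /free coef0 : forall b, \sum_(k <- [:: i; j]) (if k == i then p.1 else p.2) * al k b = 0.
  move=> b; rewrite big_cons big_seq1 eqxx eq_sym (negbTE ij).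
  exact: (congr1 (fun f => f b) p0).
have := coef0 i; have := coef0 j; rewrite !inE eqxx orbT eq_sym (negbTE ij) eqxx /=.
by case: p {p0 free coef0} => a b /= -> // ->.
Qed.

Lemma rank2_imaginary_coord i j x : i != j -> ~~ is_real A i -> pair_word i j x ->
  let p := foldr (refl_coord i j) (1, 0) x in
  [/\ 0 <= p.1, 0 <= p.2 & (is_real A j -> p.2 <= p.1 * - A j i)].
Proof.
move=> ij im_i; have Aii := cartan_imaginary im_i; have Aij := cartan_offdiag ij.
have Aji : A j i <= 0 by apply: cartan_offdiag; rewrite eq_sym.
elim: x => [|k x IH] /=; first by split => //; rewrite mul1r; lia.
case/andP => /orP [] /eqP -> /IH; case: (foldr _ _ _) => a b /= [a_ge0 b_ge0 ba].
- rewrite refl_coord_l /=.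
  have aAii : 0 <= a * - A i i by nia.
  have bAij : 0 <= b * - A i j by nia.
  by split => //; [lia | move/ba; nia].
- rewrite refl_coord_r //=; case: (cartan_diag j) => [re_j|[im_j Ajj]].
    by have := ba re_j; rewrite (cartan_real re_j); split => //; nia.
  by split => //; [nia | rewrite (negbTE im_j)].
Qed.

Lemma rank2_real_imaginary_coord i j x p : i != j -> is_real A i -> ~~ is_real A j ->
  pair_word i j x -> 0 <= p.2 -> 0 <= p.1 -> p.1 <= p.2 * - A i j ->
  let q := foldr (refl_coord i j) p x in
  [/\ 0 <= q.2, 0 <= q.1 & q.1 <= q.2 * - A i j].
Proof.
move=> ij re_i im_j; have Ajj := cartan_imaginary im_j; have Aij := cartan_offdiag ij.
have Aji : A j i <= 0 by apply: cartan_offdiag; rewrite eq_sym.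
move=> + p2 p1 p12; elim: x => [|k x IH] /=; first by split.
case/andP => /orP [] /eqP -> /IH; case: (foldr _ _ _) => a b /= [b_ge0 a_ge0 ab].
- by rewrite refl_coord_l /= (cartan_real re_i); split => //; nia.
- by rewrite refl_coord_r //=; split => //; nia.
Qed.

Lemma rank2_orthogonal_coord i j x : i != j -> is_real A i -> ~~ is_real A j -> A i j = 0 ->
  pair_word i j x -> reduced (rcons x i) -> foldr (refl_coord i j) (1, 0) x = (1, 0).
Proof.
move=> ij re_i im_j Aij; have Aji := cartan_sym0 Aij.
elim/last_ind: x => [//|x k IH]; rewrite all_rcons => /andP [/orP [] /eqP -> x_ij] red_xk.
  by case: (@not_reduced_sq x i [::] re_i); rewrite -!cats1 -catA in red_xk.
rewrite foldr_rcons refl_coord_r //= Aji mul1r add0r mul0r addr0 oppr0 IH //.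
have red_x_ji : reduced (x ++ [:: j; i]) by move: red_xk; rewrite -!cats1 -catA.
have red_x_ij : reduced (x ++ [:: i; j]).
  apply: reduced_wequiv red_x_ji _ _; last by rewrite !size_cat.
  by apply/wequiv_catl/wrel_wequiv/wrel_comm.
by rewrite -cats1; apply: (@reduced_catl _ [:: j]); rewrite -catA.
Qed.

Lemma pair_word_real (i j : I) x : is_real A i -> is_real A j ->
  pair_word i j x -> all (is_real A) x.
Proof. by move=> re_i re_j; apply: sub_all => k /orP [] /eqP ->. Qed.

Lemma reduced_real_pair_word i j x : i != j -> is_real A i -> is_real A j ->
  pair_word i j x -> reduced (rcons x i) -> x = alternating j i (size x).
Proof.
move=> ij re_i re_j; elim: x => [//|k x IH] /andP [k_ij x_ij] red_kxi.
have red_xi : reduced (rcons x i) by apply: (@reduced_catr [:: k]).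
have x_alt := IH x_ij red_xi.
rewrite [size _]/= alternating_cons -x_alt; congr (_ :: _).
have xi_alt : rcons x i = (if odd (size x) then j else i) :: alternating i j (size x).
  by rewrite -alternating_cons /= {1}x_alt cats1.
move: red_kxi; rewrite rcons_cons xi_alt.
have re_k : is_real A k by case/orP: k_ij => /eqP ->.
by case: (odd _); case/orP: k_ij => /eqP -> //= red_kk;
  case: (@not_reduced_sq [::] _ (alternating i j (size x)) _ red_kk).
Qed.

Lemma not_reduced_alternating i j m : is_real A i -> is_real A j ->
  we (alt_word j i m) [::] -> (0 < m)%N -> ~ reduced (alternating i j m.+1).
Proof.
move=> re_i re_j braid m_gt0 red_alt.
have m2 : m.*2 = (m.-1 + m.+1)%N by rewrite -addnn; lia.
move: braid; rewrite alt_word_alternating m2 alternating_add.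
set p := (if _ then _ else _) => braid.
have re_p : all (is_real A) p.
  apply: (@pair_word_real i j) => //; rewrite /p; case: (odd _); last exact: alternating_pair_word.
  by apply: sub_all (alternating_pair_word j i m.-1) => k; rewrite orbC.
have shorter : we (alternating i j m.+1) (rev p).
  have := wequiv_catl (rev p) braid; rewrite cats0 catA; apply: wequiv_trans.
  exact/wequiv_sym/(wequiv_catr (alternating i j m.+1) (wequiv_rev_cat re_p)).
have := red_alt _ shorter; rewrite size_rev /p size_alternating.
by case: (odd _); rewrite size_alternating; lia.
Qed.

Lemma reduced_alternating_lt i j m n : is_real A i -> is_real A j ->
  we (alt_word j i m) [::] -> (0 < m)%N -> reduced (alternating i j n) -> (n <= m)%N.
Proof.
move=> re_i re_j braid m_gt0 red_n; rewrite leqNgt; apply/negP => lt_mn.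
move: red_n; rewrite -(subnK lt_mn) alternating_add => /reduced_catr.
exact: not_reduced_alternating.
Qed.

Definition rot_coord (aij aji x y : int) (p : int * int) : int * int :=
  let b := - p.2 - y - p.1 * aji in (- p.1 - x - b * aij, b).

Lemma pairing_add_comb2 k i j mu p :
  pairing (av k) (fun b => mu b + comb2 i j p b) = pairing (av k) mu + p.1 * A k i + p.2 * A k j.
Proof.
rewrite (@eq_pairing _ _ (fun b => 1 * mu b + 1 * comb2 i j p b)); last by move=> b; ring.
by rewrite pairing_lincomb pairing_comb2; ring.
Qed.

Lemma iter_refl_rot i j k mu : is_real A i -> is_real A j ->
  iter k (fun nu => r i (r j nu)) mu =
  (fun b => mu b + comb2 i j
     (iter k (rot_coord (A i j) (A j i) (pairing (av i) mu) (pairing (av j) mu)) (0, 0)) b).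
Proof.
move=> /cartan_real Aii /cartan_real Ajj.
elim: k => [|k IH]; first by apply: functional_extensionality => b; rewrite /comb2 /=; ring.
rewrite !iterS IH; apply: functional_extensionality => b.
rewrite {1}/refl pairing_refl !pairing_add_comb2 /refl pairing_add_comb2.
by rewrite /comb2 /rot_coord /= Aii Ajj; ring.
Qed.

Lemma order_is_rot i j m : i != j -> is_real A i -> is_real A j -> (0 < m)%N ->
  (forall x y, iter m (rot_coord (A i j) (A j i) x y) (0, 0) = (0, 0)) ->
  (forall k, (0 < k < m)%N -> iter k (rot_coord (A i j) (A j i) 2 (A j i)) (0, 0) != (0, 0)) ->
  order_is av al i j m.
Proof.
move=> ij re_i re_j m_gt0 period aperiodic; split => //; split.
  move=> mu; rewrite iter_refl_rot // period.
  by apply: functional_extensionality => b; rewrite /comb2 /=; ring.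
move=> k /aperiodic /negP rot_k; exists (al i); rewrite iter_refl_rot // !pairing_simple.
rewrite (cartan_real re_i) => fix_al; apply/rot_k/eqP/(comb2_eq0 ij).
apply: functional_extensionality => b; have := congr1 (fun f => f b) fix_al => /=; lia.
Qed.

Definition real_coord (aij aji : int) (left : bool) (p : int * int) : int * int :=
  if left then (- p.1 - p.2 * aij, p.2) else (p.1, - p.2 - p.1 * aji).

Lemma foldr_refl_coord_real i j x p : i != j -> is_real A i -> is_real A j -> pair_word i j x ->
  foldr (refl_coord i j) p x = foldr (real_coord (A i j) (A j i)) p (map (eq_op^~ i) x).
Proof.
move=> ij /cartan_real Aii /cartan_real Ajj.
have ji : (j == i) = false by rewrite eq_sym (negbTE ij).
elim: x => [//|k x IH] /= /andP [k_ij /IH ->]; set q := foldr _ p _.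
case/orP: k_ij => /eqP ->; rewrite ?refl_coord_l ?refl_coord_r // ?eqxx ?ji /real_coord /=.
  by rewrite Aii; congr pair; ring.
by rewrite Ajj; congr pair; ring.
Qed.

Lemma rank2_finite_type i j : i != j -> is_real A i -> is_real A j -> A i j * A j i <= 3 ->
  exists m, [/\ (0 < m)%N, we (alt_word j i m) [::] &
    forall n, (n < m)%N -> let p := foldr (refl_coord i j) (1, 0) (alternating j i n) in
      0 <= p.1 /\ 0 <= p.2].
Proof.
move=> ij re_i re_j small.
have ji : (j == i) = false by rewrite eq_sym (negbTE ij).
have [Aii Ajj] := (cartan_real re_i, cartan_real re_j).
have Aij_le0 := cartan_offdiag ij.
have Aji_le0 : A j i <= 0 by apply: cartan_offdiag; rewrite eq_sym.
have Aij0 := @cartan_sym0 i j; have Aji0 := @cartan_sym0 j i.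
have braid m : m \in [:: 2; 3; 4; 6]%N ->
  (forall x y, iter m (rot_coord (A i j) (A j i) x y) (0, 0) = (0, 0)) ->
  (forall k, (0 < k < m)%N -> iter k (rot_coord (A i j) (A j i) 2 (A j i)) (0, 0) != (0, 0)) ->
  we (alt_word j i m) [::].
  move=> m_in period aperiodic; apply/wrel_wequiv/wrel_braid_r => //.
  by apply: order_is_rot => //; case: m m_in {period aperiodic}.
have [Aij|[Aij|[Aij|Aij]]] : A i j = 0 \/ A i j = -1 \/ A i j = -2 \/ A i j = -3 by nia.
all: have [Aji|[Aji|[Aji|Aji]]] : A j i = 0 \/ A j i = -1 \/ A j i = -2 \/ A j i = -3 by nia.
all: rewrite ?Aij ?Aji in small Aij0 Aji0 braid; try (exfalso; lia).
all: [> exists 2%N | exists 3%N | exists 4%N | exists 6%N | exists 4%N | exists 6%N].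
all: split => //; first (apply: braid => //;
  [move=> x y; rewrite /rot_coord /=; congr pair; ring | by do 6?[case=> //]]).
all: move=> n lt_nm; rewrite foldr_refl_coord_real // ?map_alternating ?eqxx ?ji ?Aij ?Aji;
  last by apply: sub_all (alternating_pair_word j i n) => k; rewrite orbC.
all: by move: n lt_nm; do 7?[case=> //]; split.
Qed.

(* For [A i j * A j i >= 4], [r_i] and [r_j] swap the two cones
   [2 a <= - A i j * b] and [- A i j * b <= 2 a] of coordinates [(a, b)] inside
   the nonnegative quadrant. *)
Lemma rank2_infinite_type_coord i j n : i != j -> is_real A i -> is_real A j ->
  4 <= A i j * A j i ->
  let q := foldr (refl_coord i j) (1, 0) (alternating j i n) in
  [/\ 0 <= q.1, 0 <= q.2 &
      if odd n then 2 * q.1 <= - A i j * q.2 else - A i j * q.2 <= 2 * q.1].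
Proof.
move=> ij /cartan_real Aii /cartan_real Ajj big.
have Aij := cartan_offdiag ij; have Aji : A j i <= 0 by apply: cartan_offdiag; rewrite eq_sym.
elim: n => [|n]; first by rewrite /= mulr0; split => //; lia.
rewrite alternating_cons /=; case: (foldr _ _ _) => a b /= [a_ge0 b_ge0].
case: (odd n) => /= ab.
- by rewrite refl_coord_l /= Aii; split; nia.
- by rewrite refl_coord_r //= Ajj; split; nia.
Qed.

Lemma rank2_real_imaginary_nonneg i j x : i != j -> is_real A i -> ~~ is_real A j ->
  pair_word i j x -> reduced (rcons x i) ->
  0 <= (foldr (refl_coord i j) (1, 0) x).1 /\ 0 <= (foldr (refl_coord i j) (1, 0) x).2.
Proof.
move=> ij re_i im_j x_ij red_xi.
have [Aij0|Aij_neq0] := eqVneq (A i j) 0.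
  by rewrite (rank2_orthogonal_coord ij re_i im_j Aij0 x_ij red_xi).
case/lastP: x x_ij red_xi => [//|x k].
rewrite all_rcons => /andP [/orP [] /eqP -> x_ij] red_xki.
  by case: (@not_reduced_sq x i [::] re_i); rewrite -!cats1 -catA in red_xki.
have Aij := cartan_offdiag ij; have Aji : A j i <= 0 by apply: cartan_offdiag; rewrite eq_sym.
have Aji_neq0 : A j i != 0 by apply: contra Aij_neq0 => /eqP /cartan_sym0 ->.
rewrite foldr_rcons refl_coord_r //= mul1r mul0r addr0 sub0r.
have p2 : 0 <= - A j i by lia.
have p12 : 1 <= - A j i * - A i j by nia.
by have [] := @rank2_real_imaginary_coord i j x (1, - A j i) ij re_i im_j x_ij p2 ler01 p12.
Qed.

Lemma rank2_act_simple_root i j x : i != j -> pair_word i j x ->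
  (is_real A i -> reduced (rcons x i)) ->
  exists a b, [/\ 0 <= a, 0 <= b & act x (al i) = comb2 i j (a, b)].
Proof.
move=> ij x_ij red_xi; rewrite (simple_root_comb2 i j) act_comb2 //.
suff : 0 <= (foldr (refl_coord i j) (1, 0) x).1 /\ 0 <= (foldr (refl_coord i j) (1, 0) x).2.
  by case: (foldr _ _ _) => a b [a_ge0 b_ge0]; exists a, b.
have [re_i|im_i] := boolP (is_real A i); last by case: (rank2_imaginary_coord ij im_i x_ij).
have {}red_xi := red_xi re_i.
have [re_j|im_j] := boolP (is_real A j); last exact: rank2_real_imaginary_nonneg.
have x_alt := reduced_real_pair_word ij re_i re_j x_ij red_xi.
rewrite x_alt; have [small|big] := lerP (A i j * A j i) 3.
  have [m [m_gt0 braid coord]] := rank2_finite_type ij re_i re_j small.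
  apply: coord; apply: (reduced_alternating_lt re_i re_j braid m_gt0).
  by rewrite /= -x_alt cats1.
by case: (@rank2_infinite_type_coord i j (size x) ij re_i re_j) => //; lia.
Qed.

(** * Positivity and the stabilizer *)

Lemma refl_eq0 k mu : r k mu = (fun _ => 0) -> mu = (fun _ => 0).
Proof.
move=> rmu0; set c := pairing (av k) mu.
have mu_al : mu = (fun b => c * al k b).
  apply: functional_extensionality => b.
  by have := congr1 (fun f => f b) rmu0; rewrite /refl -/c; lia.
have c_Akk : c = c * A k k.
  rewrite {1}/c {1}mu_al (@eq_pairing _ _ (fun b => c * al k b + 0 * al k b)).
    by rewrite pairing_lincomb pairing_simple; ring.
  by move=> b; ring.
have c0 : c = 0 by case: (cartan_diag k) => [/cartan_real Akk|[_ Akk]]; rewrite ?Akk in c_Akk; nia.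
by rewrite mu_al c0; apply: functional_extensionality => b; rewrite mul0r.
Qed.

Lemma act_neq0 w mu : mu <> (fun _ => 0) -> act w mu <> (fun _ => 0).
Proof. by elim: w => [//|k w IH] mu_neq0 /= /refl_eq0; exact: IH. Qed.

(* [v] is a shortest representative of the coset of [w r_j] modulo the
   submonoid generated by [r_i] and [r_j]. *)
Lemma reduced_pair_factorization w i j : reduced (rcons w j) ->
  exists v x, [/\ we (rcons w j) (v ++ x), reduced (v ++ x), pair_word i j x,
                 (size v <= size w)%N
               & forall k, (k == i) || (k == j) -> is_real A k -> reduced (rcons v k)].
Proof.
move=> red_wj.
pose factor n := exists v x : seq I, [/\ size v = n, pair_word i j x, we (rcons w j) (v ++ x)
                                & (size v + size x = (size w).+1)%N].
have factor_w : factor (size w).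
  exists w, [:: j]; rewrite /= eqxx orbT cats1 addn1; split => //; exact: wequiv_refl.
have [n [[v [x [<- x_ij wj_vx size_vx]]] min_n]] := ex_minimal_nat factor_w.
have red_vx : reduced (v ++ x).
  by apply: reduced_wequiv red_wj wj_vx _; rewrite size_cat size_vx size_rcons.
exists v, x; split => //; first by rewrite leqNgt; apply/negP => /min_n; apply.
move=> k k_ij re_k; apply: NNPP => /not_reduced_shorter [u [vk_u _ lt_u]].
have lt_uv : (size u < size v)%N.
  move: lt_u (wequiv_odd_size vk_u); rewrite size_rcons ltnS leq_eqVlt => /orP [/eqP ->|//].
  by rewrite /=; case: (odd (size v)).
have wj_ukx : we (rcons w j) (u ++ k :: x).
  apply: wequiv_trans wj_vx _; rewrite -cat1s catA.
  apply: (wequiv_catr x).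
  have v_vkk : we v (rcons v k ++ [:: k]).
    by rewrite cat_rcons; have := wequiv_catl v (wequiv_sq re_k); rewrite cats0 => /wequiv_sym.
  exact: wequiv_trans v_vkk (wequiv_catr [:: k] vk_u).
have := red_wj _ wj_ukx; rewrite size_rcons size_cat /= => le_w_ux.
apply: (min_n _ lt_uv); exists u, (k :: x); split => //; first by rewrite /= k_ij.
by rewrite /=; lia.
Qed.

Lemma reduced_act_simple_root w i : reduced w -> (is_real A i -> reduced (rcons w i)) ->
  Qplus (act w (al i)).
Proof.
elim: {w}(size w).+1 {-2}w (ltnSn (size w)) i => // n IH w.
case/lastP: w => [_ i _ _|w j]; first exact: Qplus_simple.
rewrite size_rcons ltnS => lt_wn i red_wj red_wji.
have IHw v k : (size v <= size w)%N -> reduced v -> (is_real A k -> reduced (rcons v k)) ->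
    Qplus (act v (al k)).
  by move=> le_vw; apply: IH; apply: leq_ltn_trans lt_wn.
have [eq_ij|ij] := eqVneq i j; first subst j.
  have im_i : ~~ is_real A i.
    apply/negP => re_i; apply: (@not_reduced_sq w i [::] re_i).
    by have := red_wji re_i; rewrite -!cats1 -catA.
  rewrite act_rcons refl_simple_root act_scale; apply: Qplus_scale.
    by apply: IHw => //; apply: (@reduced_catl _ [:: i]); rewrite cats1.
  by have := cartan_imaginary im_i; lia.
have [v [x [wj_vx red_vx x_ij le_vw descent]]] := reduced_pair_factorization i red_wj.
have size_vx := reduced_wequiv_size red_vx red_wj (wequiv_sym wj_vx).
have red_xi : is_real A i -> reduced (rcons x i).
  move=> /red_wji red_wj_i; apply: (@reduced_catr v); rewrite -cats1 catA.
  apply: reduced_wequiv red_wj_i _ _; last by rewrite size_cat size_vx !size_rcons addn1.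
  by rewrite -cats1; apply: wequiv_catr.
have [a [b [a_ge0 b_ge0 x_al]]] := rank2_act_simple_root ij x_ij red_xi.
rewrite (wequiv_act _ wj_vx) act_cat x_al /comb2 act_lincomb.
by apply: Qplus_lincomb => //; apply: IHw (reduced_catl red_vx) _ => //; apply: descent;
  rewrite eqxx ?orbT.
Qed.

Lemma act_rcons_lincomb v i lam :
  act (rcons v i) lam = (fun b => act v lam b - pairing (av i) lam * act v (al i) b).
Proof.
rewrite act_rcons (_ : r i lam = fun b => 1 * lam b + (- pairing (av i) lam) * al i b).
  by rewrite act_lincomb; apply: functional_extensionality => b; ring.
by apply: functional_extensionality => b; rewrite /refl; ring.
Qed.

Lemma dominant_sub_act_Qplus lam v : dominant av lam -> reduced v ->
  Qplus (fun b => lam b - act v lam b).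
Proof.
move=> dom_lam; elim/last_ind: v => [_|v i IH red_vi].
  have -> : (fun b => lam b - act [::] lam b) = (fun _ => 0).
    by apply: functional_extensionality => b; rewrite subrr.
  exact: Qplus0.
have red_v : reduced v by apply: (@reduced_catl _ [:: i]); rewrite cats1.
have Q_vi := reduced_act_simple_root red_v (fun _ => red_vi).
have := Qplus_lincomb (IH red_v) Q_vi ler01 (dom_lam i).
congr Qplus; rewrite act_rcons_lincomb.
by apply: functional_extensionality => b; ring.
Qed.

Lemma reduced_stab_parabolic lam v : dominant av lam -> reduced v -> act v lam = lam ->
  exists2 u : seq I, all (fun i => pairing (av i) lam == 0) u & we v u.
Proof.
move=> dom_lam; elim/last_ind: v => [_ _|v i IH red_vi fix_vi].
  by exists [::] => //; exact: wequiv_refl.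
have red_v : reduced v by apply: (@reduced_catl _ [:: i]); rewrite cats1.
set c := pairing (av i) lam.
have fix_b b : act v lam b - c * act v (al i) b = lam b by rewrite -{2}fix_vi act_rcons_lincomb.
have Q_vi := Qplus_scale (reduced_act_simple_root red_v (fun _ => red_vi)) (dom_lam i).
have vi0 : (fun b => c * act v (al i) b) = fun _ => 0.
  apply: (Qplus_sum_eq0 Q_vi (dominant_sub_act_Qplus dom_lam red_v)) => b.
  by have := fix_b b; lia.
have c0 : c = 0.
  apply: NNPP => c_neq0; apply: (@act_neq0 v (al i) (@simple_root_neq0 i)).
  apply: functional_extensionality => b; have /eqP := congr1 (fun f => f b) vi0.
  by rewrite mulf_eq0 => /orP [/eqP|/eqP].
have [|u u_par vu] := IH red_v.
  by apply: functional_extensionality => b; rewrite -(fix_b b) c0 mul0r subr0.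
exists (rcons u i); first by rewrite all_rcons u_par andbT -/c c0.
by rewrite -!cats1; apply: wequiv_catr.
Qed.

Lemma act_parabolic lam u : all (fun i => pairing (av i) lam == 0) u -> act u lam = lam.
Proof.
elim: u => [//|k u IH] /= /andP [/eqP k0 /IH ->].
by apply: functional_extensionality => b; rewrite /refl k0 mul0r subr0.
Qed.

End StabilizerOfDominantWeight.

Theorem lemma2p2p11 (I : countType) (B : choiceType) (A : I -> I -> int)
    (av : I -> coweight B) (al : I -> weight B)
    (hA : BC_matrix A) (hD : realization A av al)
    (lam : weight B) (hlam : dominant av lam) (w : seq I) :
  in_stab av al lam w <-> in_parabolic A av al lam w.
Proof.
split => [fix_w | [u u_par wu]].
- have [v [wv red_v]] := ex_reduced A av al w.
  have fix_v : act av al v lam = lam by rewrite -(wequiv_act hA hD lam wv).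
  have [u u_par vu] := reduced_stab_parabolic hA hD hlam red_v fix_v.
  by exists u => //; exact: wequiv_trans vu.
- by rewrite /in_stab (wequiv_act hA hD lam wu) act_parabolic.
Qed.
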